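(* Let $Z$ be a decision structure and $P$ a modular partition of $N(Z)$. Then the quotient $Z/P$ is a decision structure (in particular it is acyclic, has a unique source, and no two arcs leaving the same node share a label; and there is at most one arc between any ordered pair of blocks). Moreover, if $P$ is a maximal partition, then $Z/P$ is prime.
   Context: A decision structure is a finite directed acyclic graph $Z=(N,A)$, $A\subseteq N\times N$, with a unique source (node with no incoming arc), together with an arc labelling $\ell:A\to\mathcal{R}$ (into a set $\mathcal{R}$ of return values) and a node labelling by actions, such that distinct arcs leaving the same node have distinct labels; the arc out of $v$ labelled $r$, if it exists, is the $r$-arc out of $v$. For $X\subseteq N$, $Z[X]$ is the induced subgraph with inherited labels. A subset $X\subseteq N(Z)$ is a module of $Z$ if $Z[X]$ has a unique source (so is a decision structure) and for every node $v\notin X$: (i) every arc from $v$ to a node of $X$ ends at the source of $Z[X]$; (ii) if for some $x\in X$ there is an arc from $x$ to $v$ labelled $r$, then every $x'\in X$ has an $r$-arc, and this arc ends either at $v$ or at a node of $X$. The modules $N(Z)$ and $\{v\}$ ($v\in N(Z)$) are trivial; $Z$ is prime if all its modules are trivial. A module is maximal if it is a proper subset of $N(Z)$ and is contained in no module other than itself and $N(Z)$. A modular partition is a partition of $N(Z)$ all of whose blocks are modules; it is a maximal partition if all blocks are maximal modules. For a partition $P$ of $N(Z)$, the quotient $Z/P$ is the arc-labelled graph with node set $P$ having an arc $(S,T)$, $S\neq T$, labelled $r$ whenever some arc labelled $r$ goes from a node of $S$ to a node of $T$ (node labels of the quotient are immaterial here). The graphs $Z[S]$, $S\in P$, are the factors.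 *)

From Stdlib Require Import Relations.
From mathcomp Require Import all_boot.
Set Implicit Arguments. Unset Strict Implicit. Unset Printing Implicit Defensive.

Section DecisionStructures.
Variables (T : finType) (R : Type).

(* A labelled graph is given by a vertex set [N : {set T}] and a labelled-arc
   relation [arc u v r] ("there is an arc from u to v labelled r").  All
   notions below concern the graph induced on [N] (arcs with both ends in N). *)
Implicit Types (N X : {set T}) (arc : T -> T -> R -> Prop).

Definition edgeIn N arc (u v : T) : Prop :=
  u \in N /\ v \in N /\ exists r, arc u v r.

Definition is_source N arc (s : T) : Prop :=
  s \in N /\ forall u r, u \in N -> ~ arc u s r.

(* decision structure on N (node labels by actions are immaterial here) *)
Definition decision_structure N arc : Prop :=
  [/\ (* at most one arc (hence one label) between an ordered pair *)
      (forall u v r r', u \in N -> v \in N -> arc u v r -> arc u v r' -> r = r'),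
      (forall u v v' r, u \in N -> v \in N -> v' \in N ->
          arc u v r -> arc u v' r -> v = v'),
      (forall u, u \in N -> ~ clos_trans T (edgeIn N arc) u u) &
      (exists! s, is_source N arc s)].

Definition is_module N arc X : Prop :=
  X \subset N /\
  exists s, (unique (is_source X arc) s) /\
   (forall v x r, v \in N -> v \notin X -> x \in X -> arc v x r -> x = s) /\
   (forall v x r, v \in N -> v \notin X -> x \in X -> arc x v r ->
      forall x', x' \in X -> exists w, w \in N /\ arc x' w r /\ (w = v \/ w \in X)).

Definition is_prime N arc : Prop :=
  forall X, is_module N arc X -> X = N \/ exists v, v \in N /\ X = [set v].

Definition maximal_module N arc X : Prop :=
  is_module N arc X /\ X \proper N /\
  forall Y, is_module N arc Y -> X \subset Y -> Y = X \/ Y = N.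

Definition modular_partition N arc (P : {set {set T}}) : Prop :=
  partition P N /\ forall S, S \in P -> is_module N arc S.

Definition maximal_partition N arc (P : {set {set T}}) : Prop :=
  partition P N /\ forall S, S \in P -> maximal_module N arc S.

Definition quotient_arc (P : {set {set T}}) arc (S S' : {set T}) (r : R) : Prop :=
  S \in P /\ S' \in P /\ S != S' /\ exists u v, u \in S /\ v \in S' /\ arc u v r.

End DecisionStructures.

From Stdlib Require Import Relations.
From mathcomp Require Import all_boot boolp.
Set Implicit Arguments. Unset Strict Implicit. Unset Printing Implicit Defensive.

(* Acyclicity on a finite type gives well-foundedness: along an arc the set of
   successors strictly shrinks, so every nonempty set of nodes has a node with
   no arc back into the set (a "terminal" node), for the arc relation and for
   its converse.  From this, every node of a set with a unique source is
   reachable from that source, and every nonempty set of nodes has a sink.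

   For a modular partition P the quotient Z/P is then a decision structure:
   a sink of a block S carries every label leaving S, and arcs entering a block
   all end at its source, which gives uniqueness of labels and of targets; a
   quotient path S ->+ S' lifts to a path between the sources of S and S', so
   quotient cycles would give cycles of Z; the block of the source of Z is the
   unique source of Z/P.  Finally, the union of the blocks of a module X of Z/P
   is a module of Z containing the source block S0 of X; if P is a maximal
   partition this union is S0 or everything, i.e. X = {S0} or X = P. *)

Section AcyclicRelations.
Variables (V : finType) (E : V -> V -> Prop).
Hypothesis E_acyclic : forall u, ~ clos_trans V E u u.

Definition successors (u : V) : {set V} := [set x | `[< clos_trans V E u x >]].

(* Along an edge the successor set strictly shrinks (u leaves it). *)
Lemma successors_shrink u v : E u v -> #|successors v| < #|successors u|.
Proof.
move=> uv; apply: proper_card; apply/properP; split.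
  apply/subsetP=> x; rewrite !inE => /asboolP vx.
  by apply/asboolP; exact: t_trans (t_step _ _ _ _ uv) vx.
exists v; rewrite inE; first by apply/asboolP; exact: t_step.
by apply/asboolP; exact: E_acyclic.
Qed.

Lemma exists_terminal (S : {set V}) x :
  x \in S -> exists2 t, t \in S & forall w, w \in S -> ~ E t w.
Proof.
move=> xS; have [t tS t_min] := arg_minnP (fun u => #|successors u|) xS.
by exists t => // w wS tw; have := t_min w wS; rewrite leqNgt successors_shrink.
Qed.

End AcyclicRelations.

Lemma transp_acyclic (V : finType) (E : V -> V -> Prop) :
  (forall u, ~ clos_trans V E u u) -> forall u, ~ clos_trans V (transp V E) u u.
Proof. by move=> acyclic u /clos_trans_transp_permute; exact: acyclic. Qed.

Lemma not_source_pred (T : finType) (R : Type) (arc : T -> T -> R -> Prop)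
    (S : {set T}) x :
  x \in S -> ~ is_source S arc x -> exists u r, u \in S /\ arc u x r.
Proof.
move=> xS; apply: contra_notP => no_pred; split=> // u r uS a.
by apply: no_pred; exists u, r.
Qed.

Lemma edgeIn_path_start (T : finType) (R : Type) (arc : T -> T -> R -> Prop)
    (N : {set T}) x y :
  clos_trans T (edgeIn N arc) x y -> x \in N.
Proof. by elim=> [? ? [] | ]. Qed.

Section Partitions.
Variables (T : finType) (P : {set {set T}}).
Hypothesis P_part : partition P [set: T].

Lemma pblock_in x : pblock P x \in P.
Proof. by case/and3P: P_part => /eqP cov _ _; apply: pblock_mem; rewrite cov in_setT. Qed.

Lemma mem_pblock_self x : x \in pblock P x.
Proof. by case/and3P: P_part => /eqP cov _ _; rewrite mem_pblock cov in_setT. Qed.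

Lemma pblock_eq B x : B \in P -> x \in B -> pblock P x = B.
Proof. by case/and3P: P_part => _ triv _; apply: def_pblock. Qed.

Lemma blocks_meet_eq B1 B2 x : B1 \in P -> B2 \in P -> x \in B1 -> x \in B2 -> B1 = B2.
Proof. by move=> B1P B2P xB1 xB2; rewrite -(pblock_eq B1P xB1) (pblock_eq B2P xB2). Qed.

Lemma notin_other_block B1 B2 x :
  B1 \in P -> B2 \in P -> B1 != B2 -> x \in B1 -> x \notin B2.
Proof.
move=> B1P B2P ne xB1; apply/negP => xB2.
by move/eqP: ne; apply; exact: blocks_meet_eq xB1 xB2.
Qed.

Lemma block_nonempty B : B \in P -> exists x, x \in B.
Proof. by case/and3P: P_part => _ _ P0 BP; apply/set0Pn; apply: contraNneq P0 => <-. Qed.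

Lemma pblock_notin x y : x \notin pblock P y -> y \notin pblock P x.
Proof.
apply: contraNN => yx; rewrite (pblock_eq (pblock_in x) yx); exact: mem_pblock_self.
Qed.

Lemma mem_cover_blocks (X : {set {set T}}) x :
  X \subset P -> (x \in cover X) = (pblock P x \in X).
Proof.
move=> XP; apply/bigcupP/idP => [[B BX xB]|xX].
  by rewrite (pblock_eq (subsetP XP _ BX) xB).
by exists (pblock P x) => //; exact: mem_pblock_self.
Qed.

End Partitions.

Section Modules.
Variables (V : finType) (R : Type) (arc : V -> V -> R -> Prop).
Variable X : {set V}.
Hypothesis X_mod : is_module [set: V] arc X.

Lemma module_entry s v x r :
  unique (is_source X arc) s -> v \notin X -> x \in X -> arc v x r -> x = s.
Proof.
case: X_mod => _ [s' [[_ s'_uniq] [entry _]]] [s_src _] vX xX a.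
by rewrite (entry v x r (in_setT v) vX xX a); exact: s'_uniq.
Qed.

Lemma module_exit v x r x' : v \notin X -> x \in X -> arc x v r -> x' \in X ->
  exists w, arc x' w r /\ (w = v \/ w \in X).
Proof.
case: X_mod => _ [_ [_ [_ exit]]] vX xX a x'X.
by have [w [_ hw]] := exit v x r (in_setT v) vX xX a x' x'X; exists w.
Qed.

Lemma module_sink_exit t u v r : t \in X -> (forall w r, w \in X -> ~ arc t w r) ->
  u \in X -> v \notin X -> arc u v r -> arc t v r.
Proof.
move=> tX t_sink uX vX a.
by have [w [tw [<-//|wX]]] := module_exit vX uX a tX; case: (t_sink w r wX).
Qed.

Lemma module_has_source : exists s, unique (is_source X arc) s.
Proof. by case: X_mod => _ [s [s_src _]]; exists s. Qed.

Lemma module_unique_source t : is_source X arc t -> unique (is_source X arc) t.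
Proof.
move=> t_src; have [s s_src] := module_has_source.
by rewrite -(proj2 s_src t t_src).
Qed.

End Modules.

Section DecisionStructureFacts.
Variables (V : finType) (R : Type) (arc : V -> V -> R -> Prop).
Hypothesis DS : decision_structure [set: V] arc.
Local Notation E := (edgeIn [set: V] arc).

Lemma arc_edge u v r : arc u v r -> E u v.
Proof. by move=> a; split; [|split]; rewrite ?in_setT //; exists r. Qed.

Lemma edge_acyclic u : ~ clos_trans V E u u.
Proof. by case: DS => _ _ acyclic _; apply: acyclic; rewrite in_setT. Qed.

Lemma arc_label_uniq u v r r' : arc u v r -> arc u v r' -> r = r'.
Proof. by case: DS => label_uniq _ _ _; apply: label_uniq; rewrite in_setT. Qed.

Lemma arc_target_uniq u v v' r : arc u v r -> arc u v' r -> v = v'.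
Proof. by case: DS => _ target_uniq _ _; apply: target_uniq; rewrite in_setT. Qed.

Lemma exists_sink (S : {set V}) x :
  x \in S -> exists2 t, t \in S & forall w r, w \in S -> ~ arc t w r.
Proof.
move=> xS; have [t tS t_term] := exists_terminal edge_acyclic xS.
by exists t => // w r wS a; exact: t_term w wS (arc_edge a).
Qed.

Lemma reachable_from_source (S : {set V}) s x :
  unique (is_source S arc) s -> x \in S -> x = s \/ clos_trans V E s x.
Proof.
move=> [_ s_uniq] xS; apply: contrapT => x_unreached.
pose unreached := [set y in S | ~~ `[< y = s \/ clos_trans V E s y >]].
have x_in : x \in unreached by rewrite inE xS; apply/asboolP.
have [t] := exists_terminal (transp_acyclic edge_acyclic) x_in.
rewrite inE => /andP [tS /asboolP t_unreached] t_first.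
have [u [r [uS ut]]] : exists u r, u \in S /\ arc u t r.
  apply: (not_source_pred tS) => t_src; apply: t_unreached; left.
  exact: esym (s_uniq t t_src).
have : u \notin unreached by apply/negP => u_in; exact: t_first u u_in (arc_edge ut).
rewrite inE uS negbK => /asboolP u_reached; apply: t_unreached; right.
case: u_reached => [<-|su]; first exact: t_step (arc_edge ut).
exact: t_trans su (t_step _ _ _ _ (arc_edge ut)).
Qed.

End DecisionStructureFacts.

Section Quotient.
Variables (V : finType) (R : Type) (arc : V -> V -> R -> Prop) (P : {set {set V}}).
Hypothesis DS : decision_structure [set: V] arc.
Hypothesis P_part : partition P [set: V].
Hypothesis P_mod : forall S, S \in P -> is_module [set: V] arc S.
Local Notation Q := (quotient_arc P arc).
Local Notation E := (edgeIn [set: V] arc).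

Lemma quotient_arcI B B' u v r : B \in P -> B' \in P ->
  u \in B -> v \in B' -> u \notin B' -> arc u v r -> Q B B' r.
Proof.
move=> BP B'P uB vB' uB' a; do 2!split=> //.
by split; [apply: contraNneq uB' => <- | exists u, v].
Qed.

Lemma quotient_arc_sink S S' r t : Q S S' r -> t \in S ->
  (forall w r, w \in S -> ~ arc t w r) -> exists2 v, v \in S' & arc t v r.
Proof.
move=> [SP [S'P [ne [u [v [uS [vS' a]]]]]]] tS t_sink; exists v => //.
rewrite eq_sym in ne.
have vS := notin_other_block P_part S'P SP ne vS'.
exact: (module_sink_exit (P_mod SP) tS t_sink uS vS a).
Qed.

Lemma quotient_label_uniq S S' r r' : Q S S' r -> Q S S' r' -> r = r'.
Proof.
move=> q q'; have [SP [S'P [ne [u [_ [uS _]]]]]] := q.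
have [t tS t_sink] := exists_sink DS uS.
have [v vS' tv] := quotient_arc_sink q tS t_sink.
have [v' v'S' tv'] := quotient_arc_sink q' tS t_sink.
have [s' s'_src] := module_has_source (P_mod S'P).
have tS' := notin_other_block P_part SP S'P ne tS.
have v_src := module_entry (P_mod S'P) s'_src tS' vS' tv.
have v'_src := module_entry (P_mod S'P) s'_src tS' v'S' tv'.
by rewrite v_src in tv; rewrite v'_src in tv'; exact: (arc_label_uniq DS tv tv').
Qed.

Lemma quotient_target_uniq S S1 S2 r : Q S S1 r -> Q S S2 r -> S1 = S2.
Proof.
move=> q1 q2; have [SP [S1P [_ [u [_ [uS _]]]]]] := q1; have [_ [S2P _]] := q2.
have [t tS t_sink] := exists_sink DS uS.
have [v vS1 tv] := quotient_arc_sink q1 tS t_sink.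
have [v' v'S2 tv'] := quotient_arc_sink q2 tS t_sink.
move: vS1; rewrite (arc_target_uniq DS tv tv') => v'S1.
exact: (blocks_meet_eq P_part S1P S2P v'S1 v'S2).
Qed.

Lemma quotient_arc_lift S S' r s s' : Q S S' r ->
  unique (is_source S arc) s -> unique (is_source S' arc) s' -> clos_trans V E s s'.
Proof.
move=> [SP [S'P [ne [u [v [uS [vS' a]]]]]]] s_src s'_src.
have uS' := notin_other_block P_part SP S'P ne uS.
rewrite -(module_entry (P_mod S'P) s'_src uS' vS' a).
case: (reachable_from_source DS s_src uS) => [<-|su]; first exact: t_step (arc_edge a).
exact: t_trans su (t_step _ _ _ _ (arc_edge a)).
Qed.

Lemma quotient_path_lift S S' : clos_trans _ (edgeIn P Q) S S' ->
  forall s, unique (is_source S arc) s ->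
  exists s', unique (is_source S' arc) s' /\ clos_trans V E s s'.
Proof.
elim=> [{}S {}S' [_ [S'P [r q]]] | S1 S2 S3 _ lift12 _ lift23] s s_src.
  have [s' s'_src] := module_has_source (P_mod S'P).
  by exists s'; split; last exact: quotient_arc_lift q s_src s'_src.
have [s2 [s2_src ss2]] := lift12 s s_src.
have [s3 [s3_src s2s3]] := lift23 s2 s2_src.
by exists s3; split; last exact: t_trans ss2 s2s3.
Qed.

(* Quotient cycles would lift to cycles of Z. *)
Lemma quotient_acyclic S : ~ clos_trans _ (edgeIn P Q) S S.
Proof.
move=> cyc; have SP := edgeIn_path_start cyc.
have [s s_src] := module_has_source (P_mod SP).
have [s' [[_ s'_uniq] ss']] := quotient_path_lift cyc s_src.
by move: ss'; rewrite -(s'_uniq s (proj1 s_src)); exact: edge_acyclic.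
Qed.

(* The block of the source of Z is the unique source of Z/P. *)
Lemma quotient_unique_source : exists! S, is_source P Q S.
Proof.
case: DS => _ _ _ [z [z_src z_uniq]].
have BzP := pblock_in P_part z.
have z_Bz : unique (is_source (pblock P z) arc) z.
  apply: (module_unique_source (P_mod BzP)); split; first exact: mem_pblock_self.
  by move=> u r _; apply: (proj2 z_src) u r (in_setT u).
exists (pblock P z); split.
  split=> // B r BP [_ [_ [ne [u [v [uB [vBz a]]]]]]].
  have uBz := notin_other_block P_part BP BzP ne uB.
  have vz := module_entry (P_mod BzP) z_Bz uBz vBz a.
  by rewrite vz in a; exact: (proj2 z_src) u r (in_setT u) a.
move=> S [SP S_src]; have [s s_src] := module_has_source (P_mod SP).
have sS := proj1 (proj1 s_src).
have [<-|nsz] := eqVneq s z; first exact: (pblock_eq P_part SP sS).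
have [u [r [_ us]]] : exists u r, u \in [set: V] /\ arc u s r.
  apply: (not_source_pred (in_setT s)) => s_glob.
  by move/eqP: nsz; apply; exact: esym (z_uniq s s_glob).
have uS : u \notin S by apply/negP => uS; exact: (proj2 (proj1 s_src)) u r uS us.
case: (S_src (pblock P u) r (pblock_in P_part u)).
exact: quotient_arcI (pblock_in P_part u) SP (mem_pblock_self P_part u) sS uS us.
Qed.

Theorem quotient_decision_structure : decision_structure P Q.
Proof.
split.
- by move=> S S' r r' _ _; exact: quotient_label_uniq.
- by move=> S S1 S2 r _ _ _; exact: quotient_target_uniq.
- by move=> S _; exact: quotient_acyclic.
- exact: quotient_unique_source.
Qed.

(* The union U of the blocks of a module X of Z/P (with source block S0, whose
   own source is s) is a module of Z with source s. *)
Section CoverOfQuotientModule.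
Variables (X : {set {set V}}) (S0 : {set V}) (s : V).
Hypothesis XP : X \subset P.
Hypothesis S0_src : unique (is_source X Q) S0.
Hypothesis X_entry : forall B B' r,
  B \in P -> B \notin X -> B' \in X -> Q B B' r -> B' = S0.
Hypothesis X_exit : forall B B' r,
  B \in P -> B \notin X -> B' \in X -> Q B' B r ->
  forall B'', B'' \in X -> exists W, W \in P /\ Q B'' W r /\ (W = B \/ W \in X).
Hypothesis s_src : unique (is_source S0 arc) s.
Local Notation U := (cover X).

Lemma S0_in_X : S0 \in X. Proof. exact: proj1 (proj1 S0_src). Qed.
Lemma S0_in_P : S0 \in P. Proof. exact: subsetP XP _ S0_in_X. Qed.
Lemma s_in_S0 : s \in S0. Proof. exact: proj1 (proj1 s_src). Qed.

Lemma mem_U x : (x \in U) = (pblock P x \in X).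
Proof. exact: (mem_cover_blocks P_part x XP). Qed.

Lemma mem_U_of B x : B \in X -> x \in B -> x \in U.
Proof. by move=> BX xB; apply/bigcupP; exists B. Qed.

Lemma notin_U_of B x : B \in X -> x \notin U -> x \notin B.
Proof. by move=> BX; apply: contraNN; exact: mem_U_of. Qed.

Lemma cover_source : is_source U arc s.
Proof.
split=> [|u r uU us]; first exact: mem_U_of S0_in_X s_in_S0.
have [uS0|uS0] := boolP (u \in S0); first exact: (proj2 (proj1 s_src)) u r uS0 us.
apply: (proj2 (proj1 S0_src) (pblock P u) r); first by rewrite -mem_U.
exact: quotient_arcI (pblock_in P_part u) S0_in_P
  (mem_pblock_self P_part u) s_in_S0 uS0 us.
Qed.

(* A source t of U is the source of its block; that block has no quotient
   predecessor in X, so it is S0 and t = s. *)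
Lemma cover_source_uniq t : is_source U arc t -> s = t.
Proof.
move=> [tU t_src]; set B := pblock P t.
have BX : B \in X by rewrite -mem_U.
have BP := subsetP XP _ BX.
have t_B : unique (is_source B arc) t.
  apply: (module_unique_source (P_mod BP)); split; first exact: mem_pblock_self.
  by move=> u r uB; apply: t_src; exact: mem_U_of BX uB.
have [eB|neB] := eqVneq B S0.
  by rewrite eB in t_B; exact: (proj2 s_src) t (proj1 t_B).
have [Y [r [YX [YP [_ [YB [u [v [uY [vB a]]]]]]]]]] : exists Y r, Y \in X /\ Q Y B r.
  apply: (not_source_pred BX) => B_src.
  by move/eqP: neB; apply; exact: esym (proj2 S0_src B B_src).
have uB := notin_other_block P_part YP BP YB uY.
have vt := module_entry (P_mod BP) t_B uB vB a.
by rewrite vt in a; case: (t_src u r (mem_U_of YX uY) a).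
Qed.

(* Arcs entering U end in S0 (by the module property of X), hence at s. *)
Lemma cover_entry v x r : v \notin U -> x \in U -> arc v x r -> x = s.
Proof.
move=> vU xU a; have xX : pblock P x \in X by rewrite -mem_U.
have vX : pblock P v \notin X by rewrite -mem_U.
have vx := notin_U_of xX vU.
have q := quotient_arcI (pblock_in P_part v) (pblock_in P_part x)
  (mem_pblock_self P_part v) (mem_pblock_self P_part x) vx a.
have x_S0 := X_entry (pblock_in P_part v) vX xX q.
have xS0 : x \in S0 by rewrite -x_S0; exact: mem_pblock_self.
exact: (module_entry (P_mod S0_in_P) s_src (notin_U_of S0_in_X vU) xS0 a).
Qed.

(* An r-arc leaving U leaves a block of X towards the block of v; the module
   property of X, then that of the block of x', transports it to x'. *)
Lemma cover_exit v x r x' : v \notin U -> x \in U -> arc x v r -> x' \in U ->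
  exists w, arc x' w r /\ (w = v \/ w \in U).
Proof.
move=> vU xU a x'U.
have vP := pblock_in P_part v; have x'P := pblock_in P_part x'.
have xX : pblock P x \in X by rewrite -mem_U.
have x'X : pblock P x' \in X by rewrite -mem_U.
have vX : pblock P v \notin X by rewrite -mem_U.
have xv := pblock_notin P_part (notin_U_of xX vU).
have q := quotient_arcI (pblock_in P_part x) vP
  (mem_pblock_self P_part x) (mem_pblock_self P_part v) xv a.
have [W [WP [[_ [_ [neW [a0 [b [a0x' [bW ab]]]]]]] W_v]]] := X_exit vP vX xX q x'X.
have bx' : b \notin pblock P x'.
  by rewrite eq_sym in neW; exact: (notin_other_block P_part WP x'P neW bW).
have [w [x'w [w_b|wx']]] :=
  module_exit (P_mod x'P) bx' a0x' ab (mem_pblock_self P_part x'); last first.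
  by exists w; split=> //; right; exact: mem_U_of x'X wx'.
rewrite w_b in x'w; exists b; split=> //.
case: W_v => [W_v|WX]; last by right; exact: mem_U_of WX bW.
left; rewrite W_v in bW neW; have [sv sv_src] := module_has_source (P_mod vP).
have a0v := notin_other_block P_part x'P vP neW a0x'.
rewrite (module_entry (P_mod vP) sv_src a0v bW ab).
exact: esym (module_entry (P_mod vP) sv_src xv (mem_pblock_self P_part v) a).
Qed.

Lemma cover_module : is_module [set: V] arc U.
Proof.
split; first exact: subsetT.
exists s; split; first by split; [exact: cover_source | exact: cover_source_uniq].
split=> [v x r _ | v x r _ vU xU a x' x'U]; first exact: cover_entry.
by have [w [x'w w_v]] := cover_exit vU xU a x'U; exists w.
Qed.

End CoverOfQuotientModule.

(* If every block is a maximal module, the union of the blocks of a module X of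
   Z/P is either its source block (X is a singleton) or everything (X = P). *)
Theorem quotient_prime :
  (forall S, S \in P -> maximal_module [set: V] arc S) -> is_prime P Q.
Proof.
move=> P_max X [XP [S0 [S0_src [X_entry X_exit]]]].
have S0X := proj1 (proj1 S0_src); have S0P := subsetP XP _ S0X.
have [s s_src] := module_has_source (P_mod S0P).
have U_mod := cover_module XP S0_src X_entry X_exit s_src.
have [_ [_ S0_max]] := P_max S0 S0P.
have [U_S0|U_all] := S0_max _ U_mod (bigcup_sup S0 S0X).
  right; exists S0; split=> //; apply/setP => B; rewrite inE.
  apply/idP/eqP => [BX|->//]; have BP := subsetP XP _ BX.
  have [y yB] := block_nonempty P_part BP.
  have : y \in cover X by exact: mem_U_of yB.
  by rewrite U_S0; exact: (blocks_meet_eq P_part BP S0P yB).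
left; apply/eqP; rewrite eqEsubset XP; apply/subsetP => B BP.
have [y yB] := block_nonempty P_part BP.
have : y \in cover X by rewrite U_all in_setT.
by rewrite (mem_U XP) (pblock_eq P_part BP yB).
Qed.

End Quotient.

Theorem mainTheorem5 (V : finType) (R : Type) (arc : V -> V -> R -> Prop)
    (P : {set {set V}}) :
  decision_structure [set: V] arc ->
  modular_partition [set: V] arc P ->
  decision_structure P (quotient_arc P arc) /\
  (maximal_partition [set: V] arc P -> is_prime P (quotient_arc P arc)).
Proof.
move=> DS [P_part P_mod]; split; first exact: quotient_decision_structure.
by move=> [_ P_max]; exact: quotient_prime.
Qed.
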